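(* Consider the controlled SEIR system described in the context. The set $$\mathbb{X}_f:=\Big\{(S,E,I)\in\Pi:\ S\le \tfrac{\gamma_{\mathrm{nom}}}{\beta_{\mathrm{nom}}},\ I\le I_{\max},\ E\le \tfrac{\gamma_{\mathrm{nom}}}{\eta}I_{\max}\Big\}\cup\mathcal{E}$$ is contained in $\mathcal{M}$. Moreover, for every $x_0\in\mathbb{X}_f$ and every $u\in\mathcal{U}$, the compartments $E$ and $I$ of $x(\cdot;x_0,u)$ decay exponentially, i.e., there exist constants $c\ge0$ and $\lambda>0$ with $E(t)+I(t)\le c\,e^{-\lambda t}$ for all $t\ge 0$.
   Context: Fix parameters $\eta>0$, $0<\beta_{\min}\le\beta_{\mathrm{nom}}$, $0<\gamma_{\mathrm{nom}}\le\gamma_{\max}<\infty$ and $I_{\max}\in(0,1)$. Let $U:=[\beta_{\min},\beta_{\mathrm{nom}}]\times[\gamma_{\mathrm{nom}},\gamma_{\max}]$ and let $\mathcal{U}$ be the set of measurable, locally integrable functions $u=(\beta,\gamma):[0,\infty)\to U$. Let $\Pi:=\{(S,E,I)\in[0,1]^3: S+E+I\le 1\}$. For $x_0\in\Pi$ and $u\in\mathcal{U}$, $x(\cdot;x_0,u)=(S,E,I)$ denotes the unique solution of $\dot S=-\beta(t)SI$, $\dot E=\beta(t)SI-\eta E$, $\dot I=\eta E-\gamma(t)I$ with $x(0)=x_0$; it stays in $\Pi$. Let $G_\Pi:=\{(S,E,I)\in\Pi: I\le I_{\max}\}$ and $\mathcal{M}:=\{x_0\in G_\Pi: x(t;x_0,u)\in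 G_\Pi\ \forall t\ge0,\ \forall u\in\mathcal{U}\}$ (maximal robust positively invariant set). The set of disease-free equilibria is $\mathcal{E}:=\{(S,0,0): S\in[0,1]\}$. *)

From HB Require Import structures.
From mathcomp Require Import all_boot all_order all_algebra.
From mathcomp Require Import all_classical all_reals all_analysis.
Set Implicit Arguments. Unset Strict Implicit. Unset Printing Implicit Defensive.
Import Order.TTheory GRing.Theory Num.Theory.
Local Open Scope classical_set_scope.
Local Open Scope ring_scope.

Section SEIR.
Variable R : realType.

Definition Sc (x : R * R * R) : R := x.1.1.
Definition Ec (x : R * R * R) : R := x.1.2.
Definition Ic (x : R * R * R) : R := x.2.

Definition Pi (x : R * R * R) : Prop :=
  [/\ 0 <= Sc x <= 1, 0 <= Ec x <= 1, 0 <= Ic x <= 1 & Sc x + Ec x + Ic x <= 1].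

Definition GPi (Imax : R) (x : R * R * R) : Prop := Pi x /\ Ic x <= Imax.

Definition DFE (x : R * R * R) : Prop := 0 <= Sc x <= 1 /\ Ec x = 0 /\ Ic x = 0.

(* admissible controls u = (beta, gamma) : [0,oo) -> U, measurable
   (bounded, hence locally integrable) *)
Definition admissible (bmin bnom gnom gmax : R) (u : R -> R * R) : Prop :=
  [/\ measurable_fun (`[0%R, +oo[ : set R) (fun t => (u t).1),
      measurable_fun (`[0%R, +oo[ : set R) (fun t => (u t).2) &
      forall t, 0 <= t -> bmin <= (u t).1 <= bnom /\ gnom <= (u t).2 <= gmax].

Definition fS (u : R -> R * R) (x : R -> R * R * R) (s : R) : R :=
  - ((u s).1 * Sc (x s) * Ic (x s)).
Definition fE (eta : R) (u : R -> R * R) (x : R -> R * R * R) (s : R) : R :=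
  (u s).1 * Sc (x s) * Ic (x s) - eta * Ec (x s).
Definition fI (eta : R) (u : R -> R * R) (x : R -> R * R * R) (s : R) : R :=
  eta * Ec (x s) - (u s).2 * Ic (x s).

(* x is a (Caratheodory) solution on [0,oo) with x(0) = x0, i.e. it
   satisfies the integral form of the ODE with locally integrable
   right-hand side. *)
Definition is_solution (eta : R) (u : R -> R * R) (x0 : R * R * R)
    (x : R -> R * R * R) : Prop :=
  forall t, 0 <= t ->
    (@lebesgue_measure R).-integrable (`[0%R, t] : set R) (EFin \o fS u x) /\
    (@lebesgue_measure R).-integrable (`[0%R, t] : set R) (EFin \o fE eta u x) /\
    (@lebesgue_measure R).-integrable (`[0%R, t] : set R) (EFin \o fI eta u x) /\
    Sc (x t) = Sc x0 + Rintegral (@lebesgue_measure R) (`[0%R, t] : set R) (fS u x) /\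
    Ec (x t) = Ec x0 + Rintegral (@lebesgue_measure R) (`[0%R, t] : set R) (fE eta u x) /\
    Ic (x t) = Ic x0 + Rintegral (@lebesgue_measure R) (`[0%R, t] : set R) (fI eta u x).

Definition MRPI (eta bmin bnom gnom gmax Imax : R) (x0 : R * R * R) : Prop :=
  GPi Imax x0 /\
  forall u, admissible bmin bnom gnom gmax u ->
  forall x, is_solution eta u x0 x ->
  forall t, 0 <= t -> GPi Imax (x t).

Definition Xf (eta bnom gnom Imax : R) (x : R * R * R) : Prop :=
  (Pi x /\ Sc x <= gnom / bnom /\ Ic x <= Imax /\ Ec x <= gnom / eta * Imax)
  \/ DFE x.

End SEIR.

(* Solutions are only given in integral form, so even their signs must be proved.
   The tool is a comparison principle for a pair of Lipschitz functions: if each of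
   them, while it is negative and both are >= -M, decreases at rate at most K M,
   then both stay nonnegative once they start so, since on a window of length
   1/(2K+2) the worst negative excursion M satisfies M <= M/2.  Applied to (S, S),
   (E, I) and (c - I, gnom c/eta - E) it gives nonnegativity, invariance of Pi, and
   invariance of X_f (with c = Imax) and of the disease-free equilibria (c = 0).
   For decay, S is nonincreasing.  If it drops below gnom/bnom at some time, the
   Lyapunov function V = E + a I with a = (1 + bnom S/gnom)/2 satisfies V' <= -l V
   from then on, which gives exponential decay.  Otherwise S stays equal to
   gnom/bnom, which forces I = 0 (S' = -beta S I) and then E = 0 (I' = eta E). *)

From HB Require Import structures.
From mathcomp Require Import all_boot all_order all_algebra.
From mathcomp Require Import all_classical all_reals all_analysis.
From mathcomp Require Import ring lra.
Set Implicit Arguments. Unset Strict Implicit. Unset Printing Implicit Defensive.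
Import Order.TTheory GRing.Theory Num.Theory.
Local Open Scope classical_set_scope.
Local Open Scope ring_scope.

Section RealFunctions.
Variable R : realType.
Implicit Types (y w : R -> R) (a h r s t T K L M : R).

Lemma lipschitz_cc0P y T L : L.-lipschitz_(`[0, T]) y <->
  (forall r s, 0 <= r <= T -> 0 <= s <= T -> `|y r - y s| <= L * `|r - s|).
Proof.
split=> [Ly r s hr hs | Ly [r s] [/= hr hs]].
- by apply: (Ly (r, s)); split; rewrite /= in_itv.
- by move: hr hs; rewrite /= !in_itv; apply: Ly.
Qed.

Lemma lipschitz_cc0Bl y T L c : L.-lipschitz_(`[0, T]) y ->
  L.-lipschitz_(`[0, T]) (fun t => c - y t).
Proof.
move=> /lipschitz_cc0P Ly; apply/lipschitz_cc0P => r s hr hs.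
by rewrite (_ : c - y r - (c - y s) = - (y r - y s)) ?normrN ?Ly //; ring.
Qed.

Lemma last_nonneg y T L a t : 0 <= L -> L.-lipschitz_(`[0, T]) y ->
  0 <= a -> a <= t -> t <= T -> 0 <= y a -> y t < 0 ->
  exists s, [/\ a <= s, s < t, 0 <= y s & forall r, s < r <= t -> y r < 0].
Proof.
move=> L0 /lipschitz_cc0P Ly a0 at_ tT ya yt.
pose A := [set r | a <= r <= t /\ 0 <= y r].
have aA : A a by split; rewrite ?lexx.
have hA : has_sup A by split; [exists a | exists t => r [/andP[]]].
have as_ : a <= sup A by apply: sup_upper_bound.
have st : sup A <= t by apply: ge_sup; [exists a | move=> r [/andP[]]].
have ys : 0 <= y (sup A).
  rewrite leNgt; apply/negP => ysn.
  pose e := - y (sup A) / (L + 1).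
  have e0 : 0 < e by rewrite divr_gt0 ?oppr_gt0 //; lra.
  have eL : (L + 1) * e = - y (sup A) by rewrite mulrC divfK //; lra.
  have [r [/andP[ar rt] yr] er] := sup_adherent e0 hA.
  have rs : r <= sup A by apply: sup_upper_bound => //; split; rewrite ?ar.
  have := Ly r (sup A); rewrite (ler0_norm (x := r - _)) ?subr_le0 //.
  move=> /(_ _ _)/wrap[]; [apply/andP; split; lra | apply/andP; split; lra |].
  have := ler_norm (y r - y (sup A)).
  have : L * - (r - sup A) <= L * e by apply: ler_wpM2l => //; lra.
  lra.
exists (sup A); split => //.
- by rewrite lt_neqAle st andbT; apply: contraTneq yt => <-; rewrite -leNgt.
- move=> r /andP[sr rt]; rewrite ltNge; apply/negP => yr.
  have : r <= sup A by apply: sup_upper_bound => //; split; rewrite ?rt ?(le_trans as_ (ltW sr)).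
  by rewrite leNgt sr.
Qed.

Definition slow_descent y w T K := forall s t M, 0 <= s -> s <= t -> t <= T -> 0 <= M ->
  (forall r, s < r <= t -> y r < 0) ->
  (forall r, s <= r <= t -> - M <= y r /\ - M <= w r) ->
  y s - K * (t - s) * M <= y t.

Lemma slow_descent_half y w T K L M a h r : 0 <= K -> 0 <= L -> 0 <= M ->
  K * h <= 1 / 2 -> L.-lipschitz_(`[0, T]) y -> slow_descent y w T K ->
  0 <= a -> 0 <= y a -> a <= r -> r <= T -> r <= a + h ->
  (forall q, a <= q -> q <= T -> q <= a + h -> - M <= y q /\ - M <= w q) ->
  - (M / 2) <= y r.
Proof.
move=> K0 L0 M0 Kh Ly Dy a0 ya ar rT rh bnd.
have [yr|yr] := leP 0 (y r); first by apply: le_trans yr; rewrite oppr_le0 divr_ge0.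
have [s [as_ sr ys neg]] := last_nonneg L0 Ly a0 ar rT ya yr.
have := Dy s r M (le_trans a0 as_) (ltW sr) rT M0 neg.
move=> /(_ _)/wrap[q /andP[sq qr]|]; first by apply: bnd; lra.
have : K * (r - s) * M <= K * h * M by rewrite ler_wpM2r // ler_wpM2l //; lra.
have : K * h * M <= 1 / 2 * M by rewrite ler_wpM2r.
lra.
Qed.

Lemma slow_descent_window y1 y2 T K L a h : 0 <= K -> 0 <= L -> 0 <= h ->
  K * h <= 1 / 2 -> L.-lipschitz_(`[0, T]) y1 -> L.-lipschitz_(`[0, T]) y2 ->
  slow_descent y1 y2 T K -> slow_descent y2 y1 T K ->
  0 <= a -> 0 <= y1 a -> 0 <= y2 a ->
  forall t, a <= t -> t <= T -> t <= a + h -> 0 <= y1 t /\ 0 <= y2 t.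
Proof.
move=> K0 L0 h0 Kh Ly1 Ly2 D1 D2 a0 y1a y2a.
pose win q := [/\ a <= q, q <= T & q <= a + h].
pose W := [set z | z = 0 \/ exists2 q, win q & z = - y1 q \/ z = - y2 q].
have W0 : W 0 by left.
have Wub : forall z, W z -> z <= L * h.
  move=> z [->|[q [aq qT qh] ez]]; first exact: mulr_ge0.
  have dist : L * `|q - a| <= L * h by rewrite ler_wpM2l // ger0_norm; lra.
  have qa : 0 <= q <= T by apply/andP; split; lra.
  have aa : 0 <= a <= T by apply/andP; split; lra.
  have /lipschitz_cc0P/(_ q a qa aa) := Ly1; have /lipschitz_cc0P/(_ q a qa aa) := Ly2.
  rewrite !ler_norml => /andP[? ?] /andP[? ?].
  by case: ez => ->; lra.
have hW : has_sup W by split; [exists 0 | exists (L * h)].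
have M0 : 0 <= sup W by apply: sup_upper_bound.
have bnd : forall q, a <= q -> q <= T -> q <= a + h -> - sup W <= y1 q /\ - sup W <= y2 q.
  move=> q aq qT qh; split; rewrite lerNl; apply: sup_upper_bound => //; right.
  - by exists q; [| left].
  - by exists q; [| right].
have half : forall q, a <= q -> q <= T -> q <= a + h ->
    - (sup W / 2) <= y1 q /\ - (sup W / 2) <= y2 q.
  move=> q aq qT qh; split.
  - exact: (slow_descent_half K0 L0 M0 Kh Ly1 D1 a0 y1a aq qT qh bnd).
  - apply: (slow_descent_half K0 L0 M0 Kh Ly2 D2 a0 y2a aq qT qh).
    by move=> p ap pT ph; have [? ?] := bnd p ap pT ph.
have : sup W <= sup W / 2.
  apply: ge_sup; first by exists 0.
  move=> z [->|[q [aq qT qh] ez]]; first exact: divr_ge0.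
  by have [? ?] := half q aq qT qh; case: ez => ->; lra.
move=> M_half t at_ tT th; have [? ?] := bnd t at_ tT th; split; lra.
Qed.

Lemma slow_descent_nonneg y1 y2 T K L : 0 <= K -> 0 <= L ->
  L.-lipschitz_(`[0, T]) y1 -> L.-lipschitz_(`[0, T]) y2 ->
  slow_descent y1 y2 T K -> slow_descent y2 y1 T K ->
  0 <= y1 0 -> 0 <= y2 0 ->
  forall t, 0 <= t <= T -> 0 <= y1 t /\ 0 <= y2 t.
Proof.
move=> K0 L0 Ly1 Ly2 D1 D2 y10 y20.
pose h := (2 * K + 2)^-1.
have h0 : 0 < h by rewrite invr_gt0; lra.
have Kh : K * h <= 1 / 2.
  by rewrite ler_pdivlMr // mulrAC ler_pdivrMr ?mul1r; lra.
suff P : forall n : nat, forall t, 0 <= t -> t <= T -> t <= n%:R * h ->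
    0 <= y1 t /\ 0 <= y2 t.
  move=> t /andP[t0 tT]; apply: (P (Num.truncn (t / h)).+1) => //.
  by have /andP[_ /ltW] := truncn_itv (divr_ge0 t0 (ltW h0)); rewrite ler_pdivrMr.
elim=> [|n IH] t t0 tT tn.
  by have -> : t = 0 by rewrite mul0r in tn; lra.
have [tn'|nt] := leP t (n%:R * h); first exact: IH.
have a0 : 0 <= n%:R * h by rewrite mulr_ge0 // ltW.
have [y1a y2a] := IH _ a0 (le_trans (ltW nt) tT) (lexx _).
apply: (slow_descent_window K0 L0 (ltW h0) Kh Ly1 Ly2 D1 D2 a0 y1a y2a) => //.
- exact: ltW.
- by move: tn; rewrite -natr1 mulrDl mul1r.
Qed.

Lemma lipschitz_ge_half y T L t : 0 <= L -> L.-lipschitz_(`[0, T]) y ->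
  0 <= t -> t < T -> 0 < y t ->
  exists2 d : R, 0 < d /\ t + d <= T & forall r, t <= r <= t + d -> y t / 2 <= y r.
Proof.
move=> L0 /lipschitz_cc0P Ly t0 tT yt.
pose d := Num.min (T - t) (y t / (2 * (L + 1))).
have d0 : 0 < d by rewrite lt_min subr_gt0 tT divr_gt0 //; lra.
have dT : d <= T - t by rewrite ge_min lexx.
have Ld : L * d <= y t / 2.
  have : d <= y t / (2 * (L + 1)) by rewrite ge_min lexx orbT.
  rewrite ler_pdivlMr; last lra.
  have : 0 <= L * d by rewrite mulr_ge0 // ltW.
  lra.
exists d => [|r /andP[tr rd]]; first by split; lra.
have /Ly : 0 <= r <= T by apply/andP; split; lra.
move=> /(_ t) /(_ _)/wrap[]; first by apply/andP; split; lra.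
rewrite (ger0_norm (x := r - t)) ?subr_ge0 // ler_norml => /andP[+ _].
have : L * (r - t) <= L * d by rewrite ler_wpM2l //; lra.
lra.
Qed.

Lemma unit_step_decay y tau lam : 0 <= lam -> 0 <= tau ->
  (forall t, 0 <= t -> y t <= 1) ->
  (forall t, tau <= t -> y (t + 1) <= expR (- lam) * y t) ->
  forall t, 0 <= t -> y t <= expR (lam * (tau + 1)) * expR (- (lam * t)).
Proof.
move=> lam0 tau0 y1 step.
have yk : forall k : nat, forall t, tau + k%:R <= t -> y t <= expR (- (lam * k%:R)).
  elim=> [|k IH] t tk; first by rewrite mulr0 oppr0 expR0 y1 //; lra.
  have tk' : tau + k%:R <= t - 1 by rewrite lerBrDr -addrA natr1.
  rewrite -[t](subrK 1) -natr1 mulrDr mulr1 opprD expRD mulrC.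
  apply: (le_trans (step _ _)); first by have := ler0n R k; lra.
  by rewrite ler_wpM2l ?expR_ge0 ?IH.
move=> t t0; rewrite -expRD.
have [tt|tt] := leP tau t.
  have /truncn_itv/andP[k1 k2] : 0 <= t - tau by rewrite subr_ge0.
  set k := Num.truncn (t - tau) in k1 k2.
  apply: (le_trans (yk k t _)); first lra.
  rewrite ler_expR -natr1 in k2 *.
  have : lam * (t - tau) <= lam * (k%:R + 1) by rewrite ler_wpM2l // ltW.
  lra.
apply: (le_trans (y1 t t0)); rewrite -[X in X <= _]expR0 ler_expR.
have : 0 <= lam * (tau + 1 - t) by rewrite mulr_ge0 //; lra.
lra.
Qed.
End RealFunctions.

Section Primitives.
Variable R : realType.
Local Notation mu := (@lebesgue_measure R).
Implicit Types (y g : R -> R) (a c r s t T : R).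

Definition primitive y g := forall s t, 0 <= s -> s <= t ->
  mu.-integrable `]s, t] (EFin \o g) /\ y t - y s = \int[mu]_(r in `]s, t]) g r.

Lemma primitive_cc0 y g c :
  (forall t, 0 <= t -> mu.-integrable `[0, t] (EFin \o g) /\
     y t = c + \int[mu]_(r in `[0, t]) g r) ->
  primitive y g.
Proof.
move=> hy s t s0 st; have [ig ->] := hy t (le_trans s0 st); have [_ ->] := hy s s0.
split; last by rewrite -(Rintegral_itvB ig) ?bnd_simp //; ring.
apply: integrableS ig => // r /=; rewrite !in_itv /= => /andP[sr ->].
by rewrite (le_trans s0 (ltW sr)).
Qed.

Lemma Rintegral_oc_cst c s t : s <= t -> \int[mu]_(r in `]s, t]) c = c * (t - s).
Proof.
move=> st; rewrite Rintegral_cst //; congr (_ * _).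
change (fine (mu `]s, t]) = t - s); rewrite lebesgue_measure_itv /= lte_fin.
by case: ltgtP st => // -> _; rewrite subrr.
Qed.

Lemma integrable_oc_cst c s t : mu.-integrable `]s, t] (EFin \o cst c).
Proof.
apply: measurable_bounded_integrable => //; last exact: bounded_cst.
apply: (@le_lt_trans _ _ (if (s%:E < t%:E)%E then (t%:E - s%:E)%E else 0%E)).
  by rewrite le_eqVlt; apply/orP; left; apply/eqP; exact: (lebesgue_measure_itv `]s, t]).
by case: ifPn => // _; exact: ltry.
Qed.

Lemma primitive_le y g c s t : primitive y g -> 0 <= s -> s <= t ->
  (forall r, s < r <= t -> g r <= c) -> y t - y s <= c * (t - s).
Proof.
move=> Py s0 st gc; have [ig ->] := Py s t s0 st.
by rewrite -Rintegral_oc_cst //; apply: le_Rintegral => //; exact: integrable_oc_cst.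
Qed.

Lemma primitive_ge y g c s t : primitive y g -> 0 <= s -> s <= t ->
  (forall r, s < r <= t -> c <= g r) -> c * (t - s) <= y t - y s.
Proof.
move=> Py s0 st gc; have [ig ->] := Py s t s0 st.
by rewrite -Rintegral_oc_cst //; apply: le_Rintegral => //; exact: integrable_oc_cst.
Qed.

Lemma primitive_nonincreasing y g a s t : primitive y g -> 0 <= a ->
  (forall r, a < r -> g r <= 0) -> a <= s -> s <= t -> y t <= y s.
Proof.
move=> Py a0 g0 a_s st.
have := primitive_le Py (le_trans a0 a_s) st (c := 0).
rewrite mul0r subr_le0; apply=> r /andP[sr _]; apply: g0.
exact: le_lt_trans sr.
Qed.

Lemma primitive_lipschitz y g T C : primitive y g ->
  (forall r, 0 <= r <= T -> `|g r| <= C) -> C.-lipschitz_(`[0, T]) y.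
Proof.
move=> Py gC.
have key r s : 0 <= s -> s <= r -> r <= T -> `|y r - y s| <= C * `|r - s|.
  move=> s0 sr rT; rewrite [`|r - s|]ger0_norm ?subr_ge0 // ler_norml.
  have gC' q : s < q <= r -> - C <= g q <= C.
    by move=> /andP[sq qr]; rewrite -ler_norml gC //; apply/andP; split; lra.
  rewrite -mulNr (primitive_ge Py s0 sr) ?(primitive_le Py s0 sr) //.
  + by move=> q /gC'/andP[].
  + by move=> q /gC'/andP[].
apply/lipschitz_cc0P => r s /andP[r0 rT] /andP[s0 sT].
have [sr|/ltW rs] := leP s r; first exact: key.
by rewrite distrC [`|r - s|]distrC; apply: key.
Qed.

Lemma primitive_bounded y g T : primitive y g -> 0 <= T ->
  exists B : R, forall t, 0 <= t <= T -> `|y t| <= B.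
Proof.
move=> Py T0; have [igT _] := Py 0 T (lexx 0) T0.
exists (`|y 0| + \int[mu]_(r in `]0, T]) `|g r|) => t /andP[t0 tT].
have [igt yt] := Py 0 t (lexx 0) t0.
have -> : y t = y 0 + (y t - y 0) by ring.
apply: (le_trans (ler_normD _ _)); rewrite lerD2l yt.
apply: (le_trans (le_normr_Rintegral _ _)) => //.
have iT := integrable_norm igT.
rewrite -subr_ge0 Rintegral_itvB ?bnd_simp //.
by apply: Rintegral_ge0 => r _; exact: normr_ge0.
Qed.

Lemma primitiveD y1 g1 y2 g2 a : primitive y1 g1 -> primitive y2 g2 ->
  primitive (fun t => y1 t + a * y2 t) (fun r => g1 r + a * g2 r).
Proof.
move=> P1 P2 s t s0 st; have [i1 e1] := P1 s t s0 st; have [i2 e2] := P2 s t s0 st.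
have i2a : mu.-integrable `]s, t] (EFin \o (fun r => a * g2 r)).
  by apply: (eq_integrable _ _ _ _ (integrableZl _ a i2)) => // r _ /=; rewrite EFinM.
split; first exact: (eq_integrable _ _ _ _ (integrableD _ i1 i2a)).
by rewrite RintegralD // RintegralZl // -e1 -e2; ring.
Qed.

Lemma primitiveBl y g c : primitive y g -> primitive (fun t => c - y t) (fun r => - g r).
Proof.
move=> Py s t s0 st; have [ig e] := Py s t s0 st.
split; first exact: (eq_integrable _ _ _ _ (integrableN ig)).
have -> : \int[mu]_(r in `]s, t]) - g r = \int[mu]_(r in `]s, t]) (-1 * g r).
  by apply: eq_Rintegral => r _; rewrite mulN1r.
by rewrite RintegralZl // -e; ring.
Qed.

Lemma primitive_slow_descent y w g T K : primitive y g ->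
  (forall r M, 0 <= r <= T -> 0 <= M -> y r < 0 -> - M <= y r -> - M <= w r ->
     - (K * M) <= g r) ->
  slow_descent y w T K.
Proof.
move=> Py rate s t M s0 st tT M0 neg bnd.
suff : - (K * M) * (t - s) <= y t - y s by lra.
apply: (primitive_ge Py s0 st) => r /andP[sr rt].
have [yM wM] : - M <= y r /\ - M <= w r by apply: bnd; rewrite (ltW sr) rt.
apply: rate yM wM => //; last by apply: neg; rewrite sr.
by apply/andP; split; lra.
Qed.

Lemma primitive_exp_decay y g tau l : primitive y g -> 0 <= tau -> 0 < l ->
  (forall t, 0 <= t -> 0 <= y t <= 1) -> (forall r, tau <= r -> g r <= - l * y r) ->
  exists2 lam : R, 0 < lam &
    forall t, 0 <= t -> y t <= expR (lam * (tau + 1)) * expR (- (lam * t)).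
Proof.
move=> Py tau0 l0 y01 rate.
have ly_ge0 r : tau <= r -> 0 <= l * y r.
  by move=> tr; case/andP: (y01 r (le_trans tau0 tr)) => y0 _; apply: mulr_ge0 => //; exact: ltW.
have mono s t : tau <= s -> s <= t -> y t <= y s.
  apply: (primitive_nonincreasing Py tau0) => r /ltW tr.
  by have := rate r tr; have := ly_ge0 r tr; lra.
have step t : tau <= t -> (1 + l) * y (t + 1) <= y t.
  move=> tt; have t1 : t <= t + 1 by lra.
  have := primitive_le Py (c := - l * y (t + 1)) (le_trans tau0 tt) t1.
  have -> : t + 1 - t = 1 by ring.
  move=> /(_ _)/wrap[r /andP[tr rt1]|]; last by lra.
  apply: (le_trans (rate r _)); first lra.
  rewrite !mulNr lerN2; apply: ler_wpM2l; [exact: ltW | apply: mono; lra].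
have l1 : 0 < 1 + l by lra.
exists (ln (1 + l)); first by rewrite ln_gt0 //; lra.
apply: unit_step_decay tau0 _ _ => [|t t0|t tt]; first by rewrite ltW // ln_gt0; lra.
  by case/andP: (y01 t t0).
rewrite expRN lnK ?posrE // mulrC ler_pdivlMr //.
by rewrite mulrC; apply: step.
Qed.
End Primitives.

Section SEIRSolution.
Variables (R : realType) (eta bmin bnom gnom gmax : R).
Hypotheses (heta : 0 < eta) (hbmin : 0 < bmin) (hb : bmin <= bnom)
  (hgnom : 0 < gnom) (hg : gnom <= gmax).
Variables (u : R -> R * R) (x0 : R * R * R) (x : R -> R * R * R).
Hypotheses (hu : admissible bmin bnom gnom gmax u) (hx : is_solution eta u x0 x)
  (hx0 : Pi x0).

Implicit Types r s t T Imax : R.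

(* [lra] ignores section hypotheses, so the parameter bounds are passed explicitly. *)
Local Ltac plra := have := heta; have := hbmin; have := hb; have := hgnom; have := hg; lra.

Local Notation gS := (fS u x).
Local Notation gE := (fE eta u x).
Local Notation gI := (fI eta u x).

Lemma control_bounds r : 0 <= r -> bmin <= (u r).1 <= bnom /\ gnom <= (u r).2 <= gmax.
Proof. by case: hu => _ _; apply. Qed.

Lemma S_primitive : primitive (fun t => Sc (x t)) gS.
Proof. by apply: (primitive_cc0 (c := Sc x0)) => t /hx[? [_ [_ [? _]]]]. Qed.

Lemma E_primitive : primitive (fun t => Ec (x t)) gE.
Proof. by apply: (primitive_cc0 (c := Ec x0)) => t /hx[_ [? [_ [_ [? _]]]]]. Qed.

Lemma I_primitive : primitive (fun t => Ic (x t)) gI.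
Proof. by apply: (primitive_cc0 (c := Ic x0)) => t /hx[_ [_ [? [_ [_ ?]]]]]. Qed.

Lemma solution_at0 : [/\ Sc (x 0) = Sc x0, Ec (x 0) = Ec x0 & Ic (x 0) = Ic x0].
Proof.
have [_ [_ [_ [-> [-> ->]]]]] := hx (lexx 0).
by rewrite set_itv1 !Rintegral_set1 !addr0.
Qed.

Lemma solution_bounded T : 0 <= T -> exists2 B : R, 0 <= B &
  forall t, 0 <= t <= T -> [/\ `|Sc (x t)| <= B, `|Ec (x t)| <= B & `|Ic (x t)| <= B].
Proof.
move=> T0; have [B1 h1] := primitive_bounded S_primitive T0.
have [B2 h2] := primitive_bounded E_primitive T0.
have [B3 h3] := primitive_bounded I_primitive T0.
exists (`|B1| + `|B2| + `|B3|) => [|t tT]; first by rewrite !addr_ge0.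
have := h1 t tT; have := h2 t tT; have := h3 t tT.
have := ler_norm B1; have := ler_norm B2; have := ler_norm B3.
have := normr_ge0 B1; have := normr_ge0 B2; have := normr_ge0 B3.
by move=> *; split; lra.
Qed.

Lemma field_bounded T : 0 <= T -> exists2 C : R, 0 <= C &
  forall r, 0 <= r <= T -> [/\ `|gS r| <= C, `|gE r| <= C & `|gI r| <= C].
Proof.
move=> T0; have [B B0 hB] := solution_bounded T0.
exists (bnom * B * B + eta * B + gmax * B) => [|r rT].
  by rewrite !addr_ge0 // !mulr_ge0 //; plra.
have [bS bE bI] := hB r rT.
have [/andP[b1 b2] /andP[g1 g2]] := control_bounds (proj1 (andP rT)).
have nb : `|(u r).1| <= bnom by rewrite ger0_norm //; plra.
have ng : `|(u r).2| <= gmax by rewrite ger0_norm //; plra.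
have hSI : `|(u r).1 * Sc (x r) * Ic (x r)| <= bnom * B * B.
  by rewrite !normrM; apply: ler_pM => //; apply: ler_pM.
have hE : `|eta * Ec (x r)| <= eta * B by rewrite normrM gtr0_norm // ler_wpM2l //; plra.
have hI : `|(u r).2 * Ic (x r)| <= gmax * B by rewrite normrM; apply: ler_pM.
have := ler_normB ((u r).1 * Sc (x r) * Ic (x r)) (eta * Ec (x r)).
have := ler_normB (eta * Ec (x r)) ((u r).2 * Ic (x r)).
have : 0 <= bnom * B * B by rewrite !mulr_ge0 //; plra.
have : 0 <= eta * B by rewrite mulr_ge0 //; plra.
have : 0 <= gmax * B by rewrite mulr_ge0 //; plra.
by rewrite /fS /fE /fI normrN => *; split; lra.
Qed.

Lemma solution_lipschitz T : 0 <= T -> exists2 L : R, 0 <= L &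
  [/\ L.-lipschitz_(`[0, T]) (fun t => Sc (x t)),
      L.-lipschitz_(`[0, T]) (fun t => Ec (x t)) &
      L.-lipschitz_(`[0, T]) (fun t => Ic (x t))].
Proof.
move=> T0; have [C C0 hC] := field_bounded T0; exists C => //.
split; [apply: (primitive_lipschitz S_primitive) | apply: (primitive_lipschitz E_primitive)
       | apply: (primitive_lipschitz I_primitive)]; by move=> r /hC[].
Qed.

Lemma S_ge0 t : 0 <= t -> 0 <= Sc (x t).
Proof.
move=> t0; have [B B0 hB] := solution_bounded t0.
have [L L0 [LS _ _]] := solution_lipschitz t0.
have K0 : 0 <= bnom * B by rewrite mulr_ge0 //; plra.
have DS : slow_descent (fun t => Sc (x t)) (fun t => Sc (x t)) t (bnom * B).
  apply: (primitive_slow_descent S_primitive) => r M rt M0 neg SM _.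
  have [_ _ bI] := hB r rt.
  have [/andP[b1 b2] _] := control_bounds (proj1 (andP rt)).
  have nS : `|Sc (x r)| <= M by rewrite ltr0_norm //; lra.
  have nb : `|(u r).1| <= bnom by rewrite ger0_norm; plra.
  have : `|(u r).1 * Sc (x r) * Ic (x r)| <= bnom * M * B.
    by rewrite !normrM; apply: ler_pM => //; apply: ler_pM.
  by rewrite /fS; have := ler_norm ((u r).1 * Sc (x r) * Ic (x r)); lra.
have [S00 _ _] := solution_at0.
have S0 : 0 <= Sc (x 0) by rewrite S00; case: hx0 => /andP[].
have tt : 0 <= t <= t by rewrite t0 lexx.
by have [] := slow_descent_nonneg K0 L0 LS LS DS DS S0 S0 tt.
Qed.

Lemma EI_ge0 t : 0 <= t -> 0 <= Ec (x t) /\ 0 <= Ic (x t).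
Proof.
move=> t0; have [B B0 hB] := solution_bounded t0.
have [L L0 [_ LE LI]] := solution_lipschitz t0.
have BM0 M : 0 <= M -> 0 <= bnom * B * M by move=> M0; rewrite !mulr_ge0 //; plra.
have eM0 M : 0 <= M -> 0 <= eta * M by move=> M0; rewrite mulr_ge0 //; plra.
have K0 : 0 <= bnom * B + eta by rewrite addr_ge0 ?mulr_ge0 //; plra.
have [_ E00 I00] := solution_at0; case: hx0 => _ /andP[E0 _] /andP[I0 _] _.
have tt : 0 <= t <= t by rewrite t0 lexx.
apply: (slow_descent_nonneg K0 L0 LE LI _ _ _ _ tt); rewrite ?E00 ?I00 //.
- apply: (primitive_slow_descent E_primitive) => r M rt M0 neg EM IM.
  have [bS _ _] := hB r rt; have Sr := S_ge0 (proj1 (andP rt)).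
  have [/andP[b1 b2] _] := control_bounds (proj1 (andP rt)).
  have bS0 : 0 <= (u r).1 * Sc (x r) by rewrite mulr_ge0 //; plra.
  have bSB : (u r).1 * Sc (x r) <= bnom * B.
    by rewrite ler_pM //; [plra | move: bS; rewrite ger0_norm].
  have : - ((u r).1 * Sc (x r) * M) <= (u r).1 * Sc (x r) * Ic (x r).
    by rewrite -mulrN ler_wpM2l.
  have : (u r).1 * Sc (x r) * M <= bnom * B * M by rewrite ler_wpM2r.
  have : eta * Ec (x r) <= 0 by rewrite pmulr_rle0 //; lra.
  by have := BM0 M M0; have := eM0 M M0; rewrite /fE; lra.
- apply: (primitive_slow_descent I_primitive) => r M rt M0 neg EM IM.
  have [_ /andP[g1 g2]] := control_bounds (proj1 (andP rt)).
  have : 0 <= (u r).2 * - Ic (x r) by rewrite mulr_ge0 //; plra.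
  have : - (eta * M) <= eta * Ec (x r) by rewrite -mulrN ler_wpM2l //; plra.
  by have := BM0 M M0; rewrite /fI; lra.
Qed.

Lemma S_nonincreasing s t : 0 <= s -> s <= t -> Sc (x t) <= Sc (x s).
Proof.
apply: (primitive_nonincreasing S_primitive (lexx 0)) => r /ltW r0.
have [/andP[b1 _] _] := control_bounds r0; have [_ Ir] := EI_ge0 r0.
by rewrite /fS oppr_le0 !mulr_ge0 ?S_ge0 //; plra.
Qed.

Lemma total_nonincreasing t : 0 <= t ->
  Sc (x t) + Ec (x t) + Ic (x t) <= Sc x0 + Ec x0 + Ic x0.
Proof.
move=> t0; have [<- <- <-] := solution_at0.
have PN := primitiveD 1 (primitiveD 1 S_primitive E_primitive) I_primitive.
have rate r : 0 < r -> gS r + 1 * gE r + 1 * gI r <= 0.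
  move=> /ltW r0; have [_ /andP[g1 _]] := control_bounds r0; have [_ Ir] := EI_ge0 r0.
  have : 0 <= (u r).2 * Ic (x r) by rewrite mulr_ge0 //; plra.
  by rewrite /fS /fE /fI !mul1r; lra.
by have := primitive_nonincreasing PN (lexx 0) rate (lexx 0) t0; rewrite !mul1r.
Qed.

Lemma Pi_solution t : 0 <= t -> Pi (x t).
Proof.
move=> t0; have := total_nonincreasing t0; have := S_ge0 t0; have [E0 I0] := EI_ge0 t0.
case: hx0 => _ _ _ N0 S0 N.
have N1 : Sc (x t) + Ec (x t) + Ic (x t) <= 1 by lra.
by split; rewrite ?N1 //; apply/andP; split; lra.
Qed.

(* The hypothesis on [Sc x0] is weighted by [c] so that [c = 0], the disease-free
   case, needs no bound on [Sc x0]. *)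
Lemma EI_box_invariant c : 0 <= c -> bnom * Sc x0 * c <= gnom * c ->
  Ic x0 <= c -> Ec x0 <= gnom / eta * c ->
  forall t, 0 <= t -> Ic (x t) <= c /\ Ec (x t) <= gnom / eta * c.
Proof.
move=> c0 hS hI hE t t0.
have [L L0 [_ LE LI]] := solution_lipschitz t0.
have K0 : 0 <= eta + bnom by plra.
have ec : eta * (gnom / eta * c) = gnom * c by rewrite mulrA mulrCA mulfV ?mulr1 ?gt_eqF.
have KM0 M : 0 <= M -> 0 <= bnom * M /\ 0 <= eta * M by split; rewrite mulr_ge0 //; plra.
have [_ E00 I00] := solution_at0.
have tt : 0 <= t <= t by rewrite t0 lexx.
suff [] : 0 <= c - Ic (x t) /\ 0 <= gnom / eta * c - Ec (x t) by split; lra.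
apply: (slow_descent_nonneg K0 L0 (lipschitz_cc0Bl c LI) (lipschitz_cc0Bl _ LE) _ _ _ _ tt).
- apply: (primitive_slow_descent (primitiveBl c I_primitive)) => r M rt M0 neg IM EM.
  have [_ /andP[g1 _]] := control_bounds (proj1 (andP rt)).
  have : eta * Ec (x r) <= eta * (gnom / eta * c + M) by rewrite ler_wpM2l //; plra.
  have : (u r).2 * c <= (u r).2 * Ic (x r) by rewrite ler_wpM2l //; plra.
  have : gnom * c <= (u r).2 * c by rewrite ler_wpM2r.
  by have [? ?] := KM0 M M0; rewrite /fI; lra.
- apply: (primitive_slow_descent (primitiveBl _ E_primitive)) => r M rt M0 neg EM IM.
  have r0 := proj1 (andP rt).
  have [/andP[b1 b2] _] := control_bounds r0.
  have [/andP[_ S1] _ _ _] := Pi_solution r0.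
  have Sr := S_ge0 r0; have SS0 := S_nonincreasing (lexx 0) r0.
  have [S00 _ _] := solution_at0; rewrite S00 in SS0.
  have bS0 : 0 <= (u r).1 * Sc (x r) by rewrite mulr_ge0 //; plra.
  have bS1 : (u r).1 * Sc (x r) <= bnom by rewrite -[bnom]mulr1 ler_pM //; plra.
  have bSc : (u r).1 * Sc (x r) * c <= gnom * c.
    apply: le_trans hS; rewrite ler_wpM2r //; apply: ler_pM => //; plra.
  have : (u r).1 * Sc (x r) * Ic (x r) <= (u r).1 * Sc (x r) * (c + M).
    by rewrite ler_wpM2l //; lra.
  have : (u r).1 * Sc (x r) * M <= bnom * M by rewrite ler_wpM2r.
  have : eta * (gnom / eta * c) <= eta * Ec (x r) by rewrite ler_wpM2l //; plra.
  by have [? ?] := KM0 M M0; rewrite /fE; lra.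
- by rewrite I00 subr_ge0.
- by rewrite E00 subr_ge0.
Qed.

Lemma I_eq0_of_S_ge : Sc x0 <= gnom / bnom ->
  (forall t, 0 <= t -> gnom / bnom <= Sc (x t)) ->
  forall t, 0 <= t -> Ic (x t) = 0.
Proof.
move=> hS0 hS t t0; have [_ It] := EI_ge0 t0.
apply: le_anti; rewrite It andbT leNgt; apply/negP => {}It.
have t1 : 0 <= t + 1 by lra.
have tt1 : t < t + 1 by lra.
have [L L0 [_ _ LI]] := solution_lipschitz t1.
have [d [d0 dT] half] := lipschitz_ge_half L0 LI t0 tt1 It.
have td : t <= t + d by lra.
have gb0 : 0 < gnom / bnom by rewrite divr_gt0 //; plra.
have := primitive_le (c := - (bmin * (gnom / bnom) * (Ic (x t) / 2))) S_primitive t0 td.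
move=> /(_ _)/wrap[r /andP[tr rd]|].
  have r0 : 0 <= r by lra.
  have [/andP[b1 _] _] := control_bounds r0.
  have h1 : bmin * (gnom / bnom) <= (u r).1 * Sc (x r).
    exact: ler_pM (ltW hbmin) (ltW gb0) b1 (hS r r0).
  have h2 : Ic (x t) / 2 <= Ic (x r) by apply: half; rewrite (ltW tr).
  have It2 : 0 <= Ic (x t) / 2 by lra.
  by rewrite /fS lerN2; apply: ler_pM h1 h2 => //; exact: mulr_ge0 (ltW hbmin) (ltW gb0).
have := S_nonincreasing (lexx 0) t0; have [-> _ _] := solution_at0.
have := hS _ (le_trans t0 td).
have : 0 < bmin * (gnom / bnom) * (Ic (x t) / 2) * (t + d - t).
  by apply: mulr_gt0; [apply: mulr_gt0 (mulr_gt0 hbmin gb0) _ |]; lra.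
lra.
Qed.

Lemma E_eq0_of_I_eq0 : (forall t, 0 <= t -> Ic (x t) = 0) ->
  forall t, 0 <= t -> Ec (x t) = 0.
Proof.
move=> hI t t0; have [Et _] := EI_ge0 t0.
apply: le_anti; rewrite Et andbT leNgt; apply/negP => {}Et.
have t1 : 0 <= t + 1 by lra.
have tt1 : t < t + 1 by lra.
have [L L0 [_ LE _]] := solution_lipschitz t1.
have [d [d0 dT] half] := lipschitz_ge_half L0 LE t0 tt1 Et.
have td : t <= t + d by lra.
have := primitive_ge (c := eta * (Ec (x t) / 2)) I_primitive t0 td.
move=> /(_ _)/wrap[r /andP[tr rd]|].
  rewrite /fI hI ?mulr0 ?subr0; last lra.
  by apply: ler_wpM2l; [exact: ltW | apply: half; rewrite (ltW tr)].
rewrite !hI //; last lra.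
have : 0 < eta * (Ec (x t) / 2) * (t + d - t) by rewrite !mulr_gt0 //; lra.
lra.
Qed.

Lemma EI_lyapunov_rate tau a r : 0 <= tau -> tau <= r -> 1 / 2 <= a <= 1 ->
  bnom * Sc (x tau) <= (2 * a - 1) * gnom ->
  gE r + a * gI r <= - ((1 - a) * Num.min eta gnom) * (Ec (x r) + a * Ic (x r)).
Proof.
move=> tau0 tr /andP[a0 a1] hS; have r0 := le_trans tau0 tr.
have [/andP[b1 b2] /andP[g1 _]] := control_bounds r0.
have Sr := S_ge0 r0; have [Er Ir] := EI_ge0 r0.
have m0 : 0 <= Num.min eta gnom by rewrite le_min; apply/andP; split; plra.
have me : Num.min eta gnom <= eta by rewrite ge_min lexx.
have mg : Num.min eta gnom <= gnom by rewrite ge_min lexx orbT.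
have h1 : (u r).1 * Sc (x r) * Ic (x r) <= (2 * a - 1) * gnom * Ic (x r).
  apply: ler_wpM2r => //; apply: le_trans hS; apply: ler_pM => //; first plra.
  exact: S_nonincreasing.
have h2 : a * gnom * Ic (x r) <= a * (u r).2 * Ic (x r).
  by rewrite ler_wpM2r // ler_wpM2l //; lra.
have h3 : (1 - a) * Num.min eta gnom * Ec (x r) <= (1 - a) * eta * Ec (x r).
  by rewrite ler_wpM2r // ler_wpM2l //; lra.
have h4 : (1 - a) * Num.min eta gnom * (a * Ic (x r)) <= (1 - a) * gnom * Ic (x r).
  rewrite mulrA; apply: ler_wpM2r => //; rewrite -mulrA; apply: ler_wpM2l; first lra.
  by rewrite -[X in _ <= X]mulr1; apply: ler_pM => //; lra.
by rewrite /fE /fI; lra.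
Qed.

Lemma EI_decay_of_S_lt tau : 0 <= tau -> Sc (x tau) < gnom / bnom ->
  exists c lam : R, 0 <= c /\ 0 < lam /\
    forall t, 0 <= t -> Ec (x t) + Ic (x t) <= c * expR (- (lam * t)).
Proof.
move=> tau0 hS; have bnom0 : 0 < bnom by plra.
pose a := (1 + bnom * Sc (x tau) / gnom) / 2.
have a_rho : bnom * Sc (x tau) = (2 * a - 1) * gnom.
  by rewrite /a; field; exact: lt0r_neq0.
have a12 : 1 / 2 <= a.
  suff : 0 <= (2 * a - 1) * gnom by rewrite pmulr_lge0 //; lra.
  by rewrite -a_rho mulr_ge0 ?S_ge0 // ltW.
have a1 : a < 1.
  have : (2 * a - 1) * gnom < 1 * gnom by rewrite -a_rho mul1r mulrC -ltr_pdivlMr.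
  by rewrite ltr_pM2r //; lra.
have a0 : 0 < a by lra.
pose l := (1 - a) * Num.min eta gnom.
have l0 : 0 < l by rewrite mulr_gt0 ?subr_gt0 // lt_min; apply/andP; split.
have rate r : tau <= r -> gE r + a * gI r <= - l * (Ec (x r) + a * Ic (x r)).
  by move=> tr; apply: (EI_lyapunov_rate tau0 tr); rewrite ?a12 ?(ltW a1) ?a_rho.
have V01 t : 0 <= t -> 0 <= Ec (x t) + a * Ic (x t) <= 1.
  move=> t0; have [Et It] := EI_ge0 t0; have [_ _ _ N] := Pi_solution t0.
  have : a * Ic (x t) <= Ic (x t) by rewrite ler_piMl // ltW.
  have := mulr_ge0 (ltW a0) It; have := S_ge0 t0.
  by move=> *; apply/andP; split; lra.
have [lam lam0 hV] := primitive_exp_decay (primitiveD a E_primitive I_primitive) tau0 l0 V01 rate.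
exists (expR (lam * (tau + 1)) / a), lam; split; first by rewrite divr_ge0 ?expR_ge0 ?ltW.
split=> // t t0; have [Et It] := EI_ge0 t0.
apply: (@le_trans _ _ ((Ec (x t) + a * Ic (x t)) / a)).
  rewrite ler_pdivlMr // mulrDl [Ic _ * a]mulrC lerD2r.
  by rewrite ler_piMr // ltW.
rewrite [X in _ <= X]mulrAC; apply: ler_wpM2r; [by rewrite invr_ge0 ltW | exact: hV].
Qed.

Lemma DFE_invariant : Ec x0 = 0 -> Ic x0 = 0 ->
  forall t, 0 <= t -> Ec (x t) = 0 /\ Ic (x t) = 0.
Proof.
move=> hE hI t t0; have [Et It] := EI_ge0 t0.
have [] := EI_box_invariant (lexx 0) _ _ _ t0; rewrite ?mulr0 ?hI ?hE //.
by move=> It0 Et0; split; apply: le_anti; rewrite ?Et ?It ?andbT.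
Qed.

Lemma Xf_invariant Imax : 0 < Imax -> Xf eta bnom gnom Imax x0 ->
  forall t, 0 <= t -> GPi Imax (x t).
Proof.
move=> I0 hX t t0; split; first exact: Pi_solution.
case: hX => [[_ [hS [hI hE]]] | [_ [hE hI]]]; last first.
  by have [_ ->] := DFE_invariant hE hI t0; exact: ltW.
have hSI : bnom * Sc x0 * Imax <= gnom * Imax.
  apply: ler_wpM2r; first exact: ltW.
  by rewrite mulrC -ler_pdivlMr //; plra.
by have [] := EI_box_invariant (ltW I0) hSI hI hE t0.
Qed.

Lemma Xf_decay Imax : Xf eta bnom gnom Imax x0 ->
  exists c lam : R, 0 <= c /\ 0 < lam /\
    forall t, 0 <= t -> Ec (x t) + Ic (x t) <= c * expR (- (lam * t)).
Proof.
move=> hX.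
have [[tau [tau0 hS]]|S_ge] := pselect (exists tau, 0 <= tau /\ Sc (x tau) < gnom / bnom).
  exact: EI_decay_of_S_lt tau0 hS.
suff EI0 : forall t, 0 <= t -> Ec (x t) = 0 /\ Ic (x t) = 0.
  by exists 0, 1; do 2!split=> //; move=> t /EI0[-> ->]; rewrite addr0 mul0r.
case: hX => [[_ [hS0 _]] | [_ [hE hI]]]; last exact: DFE_invariant.
have hge t : 0 <= t -> gnom / bnom <= Sc (x t).
  by move=> t0; rewrite leNgt; apply/negP => ?; apply: S_ge; exists t.
have I0 := I_eq0_of_S_ge hS0 hge.
by move=> t t0; split; [exact: E_eq0_of_I_eq0 | exact: I0].
Qed.

End SEIRSolution.

Lemma Xf_Pi (R : realType) (eta bnom gnom Imax : R) x0 :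
  Xf eta bnom gnom Imax x0 -> Pi x0.
Proof.
case=> [[] //|[/andP[S0 S1] [E0 I0]]].
by rewrite /Pi E0 I0 !addr0 S0 S1 lexx ler01.
Qed.

Theorem lemma2 (R : realType) (eta bmin bnom gnom gmax Imax : R)
  (heta : 0 < eta) (hbmin : 0 < bmin) (hb : bmin <= bnom)
  (hgnom : 0 < gnom) (hg : gnom <= gmax)
  (hI0 : 0 < Imax) (hI1 : Imax < 1) :
  (forall x0, Xf eta bnom gnom Imax x0 -> MRPI eta bmin bnom gnom gmax Imax x0) /\
  (forall x0, Xf eta bnom gnom Imax x0 ->
   forall u, admissible bmin bnom gnom gmax u ->
   forall x, is_solution eta u x0 x ->
   exists c lam : R, 0 <= c /\ 0 < lam /\
     forall t, 0 <= t -> Ec (x t) + Ic (x t) <= c * expR (- (lam * t))).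
Proof.
split=> x0 hX; have P0 := Xf_Pi hX.
- split=> [|u hu x hx t t0]; last exact (Xf_invariant heta hbmin hb hgnom hg hu hx P0 hI0 hX t0).
  split; first exact: P0.
  by case: hX => [[_ [_ [hI _]]]|[_ [_ ->]]] //; exact: ltW.
- by move=> u hu x hx; exact (Xf_decay heta hbmin hb hgnom hg hu hx P0 hX).
Qed.
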